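(* Let $V$ be a finite dimensional vector space over a field $\mathbb{K}$ of characteristic zero, and let $u,v_0,\ldots,v_n\in\widehat L(V)$ satisfy $|\exp(u)|\in\big|\sum_{j=0}^n\mathbb{K}[[v_j]]\big|$. Then $|u^m|\in\sum_{j=0}^n\mathbb{K}|v_j^m|$ for all $m\ge0$.
   Context: $\widehat T(V)=\prod_{m\ge0}V^{\otimes m}$ is the completed tensor algebra and $\widehat L(V)$ the completed free Lie algebra on $V$ (primitive elements of $\widehat T(V)$; they have no constant term). For $v\in\widehat L(V)$, $\mathbb{K}[[v]]\subset\widehat T(V)$ is the set of convergent series $\sum_{k\ge0}c_kv^k$, $c_k\in\mathbb{K}$. $|\widehat T(V)|$ is the quotient of $\widehat T(V)$ by the closure of the span of commutators, with projection $x\mapsto|x|$, and $|S|$ denotes the image of a subset $S$. *)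

From HB Require Import structures.
From mathcomp Require Import all_boot all_order all_algebra.
Set Implicit Arguments. Unset Strict Implicit. Unset Printing Implicit Defensive.
Import Order.TTheory GRing.Theory Num.Theory.
Local Open Scope ring_scope.

(* V = K^d with basis x_0..x_{d-1}.  The completed tensor algebra
   \widehat T(V) = prod_m V^{(x)m} is identified with noncommutative formal
   power series: a series assigns a coefficient to each word in the letters 'I_d. *)
Definition series (K : fieldType) (d : nat) := seq 'I_d -> K.

Section Series.
Variables (K : fieldType) (d : nat).
Local Notation S := (series K d).

Definition sone : S := fun w => if w == [::] then 1 else 0.

Definition smul (f g : S) : S :=
  fun w => \sum_(i < (size w).+1) f (take i w) * g (drop i w).

Fixpoint spow (f : S) (k : nat) : S :=
  if k is k'.+1 then smul f (spow f k') else sone.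

(* exp(f) = sum_k f^k / k!, for f without constant term (coefficient of a word
   w only receives contributions from k <= size w) *)
Definition sexp (f : S) : S :=
  fun w => \sum_(k < (size w).+1) (k`!%:R)^-1 * spow f k w.

(* the convergent series sum_k c_k f^k, for f without constant term *)
Definition spowser (c : nat -> K) (f : S) : S :=
  fun w => \sum_(k < (size w).+1) c k * spow f k w.

Fixpoint merge (m : seq bool) (u v : seq 'I_d) : seq 'I_d :=
  match m with
  | [::] => [::]
  | b :: m' =>
      if b then (if u is a :: u' then a :: merge m' u' v else [::])
      else (if v is a :: v' then a :: merge m' u v' else [::])
  end.

(* coefficient of u (x) v in the (shuffle) coproduct Delta(f), where
   Delta(x_i) = x_i (x) 1 + 1 (x) x_i *)
Definition coprod (f : S) (u v : seq 'I_d) : K :=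
  \sum_(m : (size u + size v).-tuple bool | count id m == size u) f (merge m u v).

(* primitive elements: Delta f = f (x) 1 + 1 (x) f;  these form \widehat L(V) *)
Definition is_lie (f : S) : Prop :=
  forall u v : seq 'I_d,
    coprod f u v = (if v == [::] then f u else 0) + (if u == [::] then f v else 0).

(* f lies in the closure (for the degree-filtration topology) of the linear span
   of commutators [a,b] = ab - ba, a b in \widehat T(V):
   for every N, f agrees with a finite sum of commutators on all words of length < N. *)
Definition in_comm_closure (f : S) : Prop :=
  forall N : nat, exists (n : nat) (a b : 'I_n -> S),
    forall w : seq 'I_d, (size w < N)%N ->
      f w = \sum_(i < n) (smul (a i) (b i) w - smul (b i) (a i) w).

End Series.

(* An element of the completed tensor algebra lies in the closure of the
   commutators iff all its cyclic sums (sums of its coefficients over the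
   rotations of a word) vanish: in characteristic zero a series with vanishing
   cyclic sums is a sum of commutators [x, B_x] with the letters x.  The Adams
   operation psi^2 = mu o Delta maps [x, B] to [x, psi^2 B] because x is
   primitive, hence preserves that closure, and it multiplies u^k and v_j^k by
   2^k because u and the v_j are primitive.  Thus the r-th iterate of psi^2
   multiplies the degree-k part u^k/k! - sum_j c_(j,k) v_j^k of
   exp(u) - sum_j f_j(v_j) by 2^(k r), and inverting this Vandermonde system
   shows that each of these parts has vanishing cyclic sums. *)

From Pilot Require Import Defs.
From HB Require Import structures.
From mathcomp Require Import all_boot all_order all_algebra.
From mathcomp Require Import ring zify.
Set Implicit Arguments.
Unset Strict Implicit.
Unset Printing Implicit Defensive.

Import GRing.Theory.
Local Open Scope ring_scope.

Lemma mem_cons_map (T : eqType) (b c : T) s (X : seq (seq T)) :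
  (b :: s \in map (cons c) X) = (b == c) && (s \in X).
Proof. by apply/mapP/andP => [[t Ht [-> ->]]|[/eqP -> Hs]]; [split|exists s]. Qed.

Lemma sum_triangle (R : nmodType) (F : nat -> nat -> R) n :
  \sum_(0 <= k < n.+1) \sum_(0 <= i < k.+1) F i k =
  \sum_(0 <= i < n.+1) \sum_(0 <= j < (n - i).+1) F i (i + j)%N.
Proof.
elim: n => [|n IH]; first by rewrite !big_nat1 addn0.
rewrite big_nat_recr //= IH [RHS]big_nat_recr //= subnn big_nat1 addn0.
rewrite [\sum_(0 <= i < n.+2) _]big_nat_recr //= addrA; congr (_ + _).
rewrite -big_split; apply: eq_big_nat => i /andP [_ Hi] /=.
by rewrite subSn // [RHS]big_nat_recr //= addnS subnKC.
Qed.

Lemma sum_take_nil (R : pzSemiRingType) (T : eqType) (s : seq T) (x : R) (G : nat -> R) :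
  \sum_(0 <= j < (size s).+1) (if take j s == [::] then x else 0) * G j = x * G 0%N.
Proof.
rewrite big_nat_recl // take0 eqxx big1_seq ?addr0 // => j.
by rewrite mem_index_iota -size_eq0 => /andP [_ Hj]; rewrite size_takel // mul0r.
Qed.

Lemma sum_drop_nil (R : pzSemiRingType) (T : eqType) (s : seq T) (x : R) (G : nat -> R) :
  \sum_(0 <= j < (size s).+1) G j * (if drop j s == [::] then x else 0) = G (size s) * x.
Proof.
rewrite big_nat_recr //= drop_size eqxx big1_seq ?add0r // => j.
rewrite mem_index_iota => /andP [_ /andP [_ Hj]].
by rewrite -size_eq0 size_drop subn_eq0 leqNgt Hj mulr0.
Qed.

Lemma pascal_conv (R : comPzSemiRingType) (A B : nat -> R) m :
  \sum_(0 <= l < m.+1) 'C(m, l)%:R * A l.+1 * B (m - l)%N +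
  \sum_(0 <= l < m.+1) 'C(m, l)%:R * A l * B (m - l).+1 =
  \sum_(0 <= l < m.+2) 'C(m.+1, l)%:R * A l * B (m.+1 - l)%N.
Proof.
rewrite [RHS]big_nat_recl // [in X in _ = _ + X](eq_bigr (fun l =>
  'C(m, l.+1)%:R * A l.+1 * B (m - l)%N + 'C(m, l)%:R * A l.+1 * B (m - l)%N)); last first.
  by move=> l _; rewrite binS natrD subSS !mulrDl.
rewrite big_split /= addrA [RHS]addrC; congr (_ + _).
rewrite big_nat_recl // [in RHS]big_nat_recr //= (bin_small (ltnSn m)) !mul0r addr0 subn0 !bin0.
by congr (_ + _); apply: eq_big_nat => l /andP [_ Hl]; rewrite subnSK.
Qed.

Lemma sum_bin_natr (R : pzSemiRingType) m :
  \sum_(0 <= l < m.+1) ('C(m, l)%:R : R) = (2 ^ m)%:R.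
Proof.
rewrite big_mkord -natr_sum -[2%N]/(1 + 1)%N expnDn; congr _%:R.
by apply: eq_bigr => l _; rewrite !exp1n !muln1.
Qed.

Lemma sum_eq_natr_mul (R : pzSemiRingType) (I : finType) (F : I -> R) c :
  \sum_x (c == x)%:R * F x = F c.
Proof.
rewrite (bigD1 c) //= eqxx mul1r big1 ?addr0 // => x.
by rewrite eq_sym => /negbTE ->; rewrite mul0r.
Qed.

Lemma poly_coefs_eq0 (R : idomainType) (a : nat -> R) N (xs : seq R) :
  uniq xs -> (N <= size xs)%N ->
  (forall x, x \in xs -> \sum_(k < N) a k * x ^+ k = 0) ->
  forall k, (k < N)%N -> a k = 0.
Proof.
move=> Uxs Nxs roots k kN.
have p0 : \poly_(i < N) a i = 0.
  apply/eqP; apply: contraLR Nxs => p_neq0; rewrite -ltnNge.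
  apply: leq_trans (size_poly N a); apply: max_poly_roots p_neq0 _ Uxs.
  by apply/allP => x /roots; rewrite /root horner_poly => ->.
by have := congr1 (coefp k) p0; rewrite /= coef_poly kN coef0.
Qed.

Section Series.
Variables (K : fieldType) (d : nat).
Local Notation S := (series K d).
Local Notation word := (seq 'I_d).

Lemma smulE (f g : S) w :
  smul f g w = \sum_(0 <= i < (size w).+1) f (take i w) * g (drop i w).
Proof. by rewrite /smul big_mkord. Qed.

Lemma eq_smul (f1 f2 g1 g2 : S) : f1 =1 f2 -> g1 =1 g2 -> smul f1 g1 =1 smul f2 g2.
Proof. by move=> E1 E2 w; apply: eq_bigr => i _; rewrite E1 E2. Qed.

Lemma smulA (f g h : S) : smul (smul f g) h =1 smul f (smul g h).
Proof.
move=> w; rewrite !smulE.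
pose F i k := f (take i w) * g (take (k - i) (drop i w)) * h (drop k w).
transitivity (\sum_(0 <= k < (size w).+1) \sum_(0 <= i < k.+1) F i k).
  apply: eq_big_nat => k /andP [_ Hk]; rewrite smulE size_takel // mulr_suml.
  by apply: eq_big_nat => i /andP [_ Hi]; rewrite /F take_takel // take_drop subnK.
rewrite sum_triangle; apply: eq_big_nat => i /andP [_ Hi].
rewrite smulE size_drop mulr_sumr; apply: eq_bigr => j _.
by rewrite /F addKn drop_drop addnC mulrA.
Qed.

Lemma smul1l (g : S) : smul (@sone K d) g =1 g.
Proof.
move=> w; rewrite smulE big_nat_recl // take0 drop0 /sone eqxx mul1r big1_seq ?addr0 // => i.
by rewrite mem_index_iota; case: w => [|z w] //= _; rewrite mul0r.
Qed.

Lemma spowD (p : S) l r : spow p (l + r) =1 smul (spow p l) (spow p r).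
Proof.
elim: l => [|l IH] w /=; first by rewrite smul1l.
by rewrite smulA; apply: eq_smul.
Qed.

Lemma spow_short (p : S) k w : p [::] = 0 -> (size w < k)%N -> spow p k w = 0.
Proof.
move=> p0; elim: k w => [|k IH] w // Hw /=.
rewrite smulE big1_seq // => -[|i] /andP [_]; first by rewrite take0 p0 mul0r.
by rewrite mem_index_iota => Hi; rewrite IH ?mulr0 // size_drop; lia.
Qed.

Lemma spowser_trunc c (p : S) N w : p [::] = 0 -> (size w < N)%N ->
  spowser c p w = \sum_(k < N) c k * spow p k w.
Proof.
move=> p0 wN; rewrite /spowser -!(big_mkord xpredT (fun k => c k * spow p k w)).
rewrite (big_cat_nat (leq0n _) wN) /= [X in _ + X]big1_seq ?addr0 // => k.
by rewrite mem_index_iota => /andP [_ /andP [wk _]]; rewrite spow_short ?mulr0.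
Qed.

Definition lquot (x : 'I_d) (f : S) : S := fun w => f (x :: w).

Lemma lquot_smul x (f g : S) :
  lquot x (smul f g) =1 fun w => smul (lquot x f) g w + f [::] * lquot x g w.
Proof. by move=> w; rewrite /lquot !smulE big_nat_recl //= addrC. Qed.

(** * The coproduct *)

Fixpoint bool_seqs (k : nat) : seq (seq bool) :=
  if k is k'.+1 then map (cons true) (bool_seqs k') ++ map (cons false) (bool_seqs k')
  else [:: [::]].

Lemma mem_bool_seqs k s : (s \in bool_seqs k) = (size s == k).
Proof.
elim: k s => [|k IH] [|b s] //=; try by rewrite mem_cat; apply/orP => -[] /mapP [].
by rewrite mem_cat !mem_cons_map !IH eqSS -andb_orl; case: b.
Qed.

Lemma uniq_bool_seqs k : uniq (bool_seqs k).
Proof.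
elim: k => //= k IH; rewrite cat_uniq !map_inj_uniq ?IH //=; try by move=> ? ? [].
by rewrite andbT; apply/hasPn => s /mapP [t _ ->]; rewrite mem_cons_map.
Qed.

Lemma coprodE (f : S) a b : coprod f a b =
  \sum_(m <- bool_seqs (size a + size b) | count id m == size a) f (Defs.merge m a b).
Proof.
set k := (size a + size b)%N.
have enumP : perm_eq (map val (enum {: k.-tuple bool})) (bool_seqs k).
  apply: uniq_perm; first by rewrite map_inj_uniq ?enum_uniq //; exact: val_inj.
    exact: uniq_bool_seqs.
  move=> s; rewrite mem_bool_seqs; apply/mapP/idP => [[t _ ->]|Hs].
    by rewrite size_tuple.
  by exists (Tuple Hs); rewrite ?mem_enum.
by rewrite -(perm_big _ enumP) big_map big_enum_cond.
Qed.

Lemma size_merge (m : seq bool) (a b : word) :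
  count id m = size a -> size m = (size a + size b)%N -> size (Defs.merge m a b) = size m.
Proof.
elim: m a b => [|[] m IH] [|x a] [|y b] //= Hc Hs; have := count_size id m;
  first [lia | by rewrite IH /=; lia].
Qed.

Lemma eq_coprod_size (f g : S) a b :
  (forall w, size w = (size a + size b)%N -> f w = g w) -> coprod f a b = coprod g a b.
Proof.
by move=> E; apply: eq_bigr => m /eqP Hc; apply: E; rewrite size_merge ?size_tuple.
Qed.

Lemma eq_coprod (f g : S) : f =1 g -> coprod f =2 coprod g.
Proof. by move=> E a b; apply: eq_coprod_size => w _. Qed.

Lemma coprodB (f g : S) a b :
  coprod (fun w => f w - g w) a b = coprod f a b - coprod g a b.
Proof. by rewrite /coprod sumrB. Qed.

Lemma coprodD (f g : S) a b :
  coprod (fun w => f w + g w) a b = coprod f a b + coprod g a b.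
Proof. by rewrite /coprod big_split. Qed.

Lemma coprodZ c (f : S) a b : coprod (fun w => c * f w) a b = c * coprod f a b.
Proof. by rewrite /coprod mulr_sumr. Qed.

Lemma coprod_sum (I : Type) (r : seq I) (P : pred I) (F : I -> S) a b :
  coprod (fun w => \sum_(i <- r | P i) F i w) a b = \sum_(i <- r | P i) coprod (F i) a b.
Proof. by rewrite /coprod exchange_big. Qed.

Lemma coprod_nill (f : S) b : coprod f [::] b = f b.
Proof.
elim: b f => [|y b IH] f; rewrite coprodE /=; first by rewrite big_cons big_nil addr0.
rewrite big_cat !big_map /= big1 // add0r -[f _]/(lquot y f b) -IH coprodE.
exact: eq_bigr.
Qed.

Lemma coprod_nilr (f : S) a : coprod f a [::] = f a.
Proof.
elim: a f => [|x a IH] f; rewrite coprodE /=; first by rewrite big_cons big_nil addr0.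
rewrite addn0 big_cat !big_map /= [X in _ + X]big_seq_cond [X in _ + X]big1 ?addr0.
  by rewrite -[f _]/(lquot x f a) -IH coprodE addn0; exact: eq_bigr.
move=> s /andP [Hm Hc]; rewrite mem_bool_seqs in Hm.
by move: (count_size id s); rewrite (eqP Hm); lia.
Qed.

Lemma coprod_cons (f : S) x a y b : coprod f (x :: a) (y :: b) =
  coprod (lquot x f) a (y :: b) + coprod (lquot y f) (x :: a) b.
Proof.
rewrite [LHS]coprodE /= big_cat !big_map /= !coprodE addnS /=.
by congr (_ + _); apply: eq_big.
Qed.

Lemma coprod_sone a b : coprod (@sone K d) a b = @sone K d a * @sone K d b.
Proof.
case: a => [|x a]; first by rewrite coprod_nill /sone mul1r.
case: b => [|y b]; first by rewrite coprod_nilr /sone mulr1.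
by rewrite coprod_cons !(@eq_coprod _ (fun _ => 0)) /coprod ?big1 ?addr0 /sone ?mul0r.
Qed.

(* The product of T(V) (x) T(V), acting on coefficient functions of pairs of words. *)
Definition tensor_mul (F G : word -> word -> K) (a b : word) : K :=
  \sum_(0 <= i < (size a).+1) \sum_(0 <= j < (size b).+1)
     F (take i a) (take j b) * G (drop i a) (drop j b).

Lemma eq_tensor_mul (F1 F2 G : word -> word -> K) :
  F1 =2 F2 -> tensor_mul F1 G =2 tensor_mul F2 G.
Proof. by move=> E a b; apply: eq_bigr => i _; apply: eq_bigr => j _; rewrite E. Qed.

Lemma tensor_mulDl (F1 F2 G : word -> word -> K) a b :
  tensor_mul (fun a' b' => F1 a' b' + F2 a' b') G a b =
  tensor_mul F1 G a b + tensor_mul F2 G a b.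
Proof.
rewrite /tensor_mul -big_split; apply: eq_bigr => i _.
by rewrite -big_split; apply: eq_bigr => j _; rewrite mulrDl.
Qed.

Lemma tensor_mul_consl (F G : word -> word -> K) x a b :
  tensor_mul F G (x :: a) b =
  \sum_(0 <= j < (size b).+1) F [::] (take j b) * G (x :: a) (drop j b) +
  tensor_mul (fun a' => F (x :: a')) G a b.
Proof. by rewrite /tensor_mul big_nat_recl. Qed.

Lemma tensor_mul_consr (F G : word -> word -> K) a y b :
  tensor_mul F G a (y :: b) =
  \sum_(0 <= i < (size a).+1) F (take i a) [::] * G (drop i a) (y :: b) +
  tensor_mul (fun a' b' => F a' (y :: b')) G a b.
Proof. by rewrite /tensor_mul -big_split; apply: eq_bigr => i _; rewrite big_nat_recl. Qed.

Lemma tensor_mul_cons2 (F G : word -> word -> K) x a y b :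
  tensor_mul F G (x :: a) (y :: b) =
  F [::] [::] * G (x :: a) (y :: b) +
  \sum_(0 <= j < (size b).+1) F [::] (y :: take j b) * G (x :: a) (drop j b) +
  \sum_(0 <= i < (size a).+1) F (x :: take i a) [::] * G (drop i a) (y :: b) +
  tensor_mul (fun a' b' => F (x :: a') (y :: b')) G a b.
Proof. by rewrite tensor_mul_consl tensor_mul_consr big_nat_recl // !addrA. Qed.

Lemma coprod_smul (f g : S) a b :
  coprod (smul f g) a b = tensor_mul (coprod f) (coprod g) a b.
Proof.
elim: {a b}(size a + size b)%N {-2}a {-2}b (erefl (size a + size b)%N) f g
  => [|n IH] [|x a] [|y b] //= Hn f g.
all: try by rewrite coprod_nill smulE /tensor_mul big_nat1; apply: eq_bigr => j _;
  rewrite !coprod_nill.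
all: try by rewrite coprod_nilr smulE /tensor_mul; apply: eq_bigr => i _;
  rewrite big_nat1 !coprod_nilr.
rewrite coprod_cons (eq_coprod (lquot_smul x f g)) (eq_coprod (lquot_smul y f g)).
rewrite !coprodD !coprodZ !IH /=; try lia.
rewrite tensor_mul_consr tensor_mul_consl [RHS]tensor_mul_cons2.
rewrite (eq_tensor_mul _ (fun a' b' => coprod_cons f x a' y b')) tensor_mulDl.
rewrite coprod_nill [coprod g (x :: a) _]coprod_cons.
have -> : \sum_(0 <= i < (size a).+1) coprod f (x :: take i a) [::] * coprod g (drop i a) (y :: b)
  = \sum_(0 <= i < (size a).+1) coprod (lquot x f) (take i a) [::] * coprod g (drop i a) (y :: b).
  by apply: eq_bigr => i _; rewrite !coprod_nilr.
have -> : \sum_(0 <= j < (size b).+1) coprod f [::] (y :: take j b) * coprod g (x :: a) (drop j b)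
  = \sum_(0 <= j < (size b).+1) coprod (lquot y f) [::] (take j b) * coprod g (x :: a) (drop j b).
  by apply: eq_bigr => j _; rewrite !coprod_nill.
ring.
Qed.

Lemma lie_nil (p : S) : is_lie p -> p [::] = 0.
Proof.
move=> Hp; have := Hp [::] [::]; rewrite coprod_nill /= => E.
by apply: (addrI (p [::])); rewrite addr0 -E.
Qed.

Lemma coprod_smul_liel (p g : S) a b : is_lie p ->
  coprod (smul p g) a b =
  \sum_(0 <= i < (size a).+1) p (take i a) * coprod g (drop i a) b +
  \sum_(0 <= j < (size b).+1) p (take j b) * coprod g a (drop j b).
Proof.
move=> Hp; rewrite coprod_smul (eq_tensor_mul _ Hp) tensor_mulDl; congr (_ + _).
  apply: eq_bigr => i _.
  by rewrite (sum_take_nil _ _ (fun j => coprod g (drop i a) (drop j b))) drop0.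
rewrite /tensor_mul exchange_big /=; apply: eq_bigr => j _.
by rewrite (sum_take_nil _ _ (fun i => coprod g (drop i a) (drop j b))) drop0.
Qed.

Lemma coprod_smul_lier (g p : S) a b : is_lie p ->
  coprod (smul g p) a b =
  \sum_(0 <= i < (size a).+1) coprod g (take i a) b * p (drop i a) +
  \sum_(0 <= j < (size b).+1) coprod g a (take j b) * p (drop j b).
Proof.
move=> Hp; rewrite coprod_smul /tensor_mul.
under eq_bigr => i _ do under eq_bigr => j _ do rewrite Hp mulrDr.
under eq_bigr => i _ do rewrite big_split /=.
rewrite big_split /=; congr (_ + _).
  apply: eq_bigr => i _.
  by rewrite (sum_drop_nil _ _ (fun j => coprod g (take i a) (take j b))) take_size.
rewrite exchange_big /=; apply: eq_bigr => j _.
by rewrite (sum_drop_nil _ _ (fun i => coprod g (take i a) (take j b))) take_size.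
Qed.

Lemma coprod_spow (p : S) m a b : is_lie p ->
  coprod (spow p m) a b =
  \sum_(0 <= l < m.+1) 'C(m, l)%:R * spow p l a * spow p (m - l) b.
Proof.
move=> Hp; elim: m a b => [|m IH] a b.
  by rewrite big_nat1 /= coprod_sone bin0 mul1r.
rewrite [spow p m.+1]/= coprod_smul_liel // -(pascal_conv (spow p ^~ a) (spow p ^~ b)).
congr (_ + _).
  under eq_bigr => i _ do rewrite IH mulr_sumr.
  rewrite exchange_big; apply: eq_bigr => l _ /=; rewrite smulE mulr_sumr mulr_suml.
  by apply: eq_bigr => i _; ring.
under eq_bigr => j _ do rewrite IH mulr_sumr.
rewrite exchange_big; apply: eq_bigr => l _ /=.
by rewrite smulE mulr_sumr; apply: eq_bigr => j _; ring.
Qed.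

(* mu o Delta, the Adams operation psi^2 of the Hopf algebra T(V). *)
Definition adams2 (f : S) : S :=
  fun w => \sum_(0 <= k < (size w).+1) coprod f (take k w) (drop k w).

Lemma eq_adams2_size (f g : S) w :
  (forall z, size z = size w -> f z = g z) -> adams2 f w = adams2 g w.
Proof.
move=> E; apply: eq_bigr => k _; apply: eq_coprod_size => z Hz; apply: E.
by rewrite Hz -size_cat cat_take_drop.
Qed.

Lemma adams2B (f g : S) w : adams2 (fun z => f z - g z) w = adams2 f w - adams2 g w.
Proof. by rewrite /adams2 -sumrB; apply: eq_bigr => k _; rewrite coprodB. Qed.

Lemma adams2Z c (f : S) w : adams2 (fun z => c * f z) w = c * adams2 f w.
Proof. by rewrite /adams2 mulr_sumr; apply: eq_bigr => k _; rewrite coprodZ. Qed.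

Lemma adams2_sum (I : Type) (r : seq I) (P : pred I) (F : I -> S) w :
  adams2 (fun z => \sum_(i <- r | P i) F i z) w = \sum_(i <- r | P i) adams2 (F i) w.
Proof. by rewrite /adams2 exchange_big; apply: eq_bigr => k _; rewrite coprod_sum. Qed.

Lemma adams2_spow (p : S) m w : is_lie p -> adams2 (spow p m) w = (2 ^ m)%:R * spow p m w.
Proof.
move=> Hp; rewrite /adams2; under eq_bigr => k _ do rewrite coprod_spow //.
rewrite exchange_big -sum_bin_natr mulr_suml; apply: eq_big_nat => l /andP [_ Hl] /=.
rewrite -[spow p m w](congr1 (spow p ^~ w) (subnKC (_ : l <= m)%N)) // spowD smulE mulr_sumr.
by apply: eq_bigr => k _; rewrite mulrA.
Qed.

Definition adams2_mid (p g : S) (w : word) : K :=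
  \sum_(0 <= l < (size w).+1) \sum_(0 <= i < l.+1)
     p (take (l - i) (drop i w)) * coprod g (take i w) (drop l w).

Lemma adams2_smul_liel (p g : S) w : is_lie p ->
  adams2 (smul p g) w = smul p (adams2 g) w + adams2_mid p g w.
Proof.
move=> Hp; rewrite /adams2 /adams2_mid; under eq_bigr => k _ do rewrite coprod_smul_liel //.
rewrite big_split /=; congr (_ + _).
  pose G i k := p (take i w) * coprod g (take (k - i) (drop i w)) (drop k w).
  transitivity (\sum_(0 <= k < (size w).+1) \sum_(0 <= i < k.+1) G i k).
    apply: eq_big_nat => k /andP [_ Hk]; rewrite size_takel //.
    by apply: eq_big_nat => i /andP [_ Hi]; rewrite /G take_takel // take_drop subnK.
  rewrite sum_triangle smulE; apply: eq_big_nat => i /andP [_ Hi].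
  rewrite size_drop mulr_sumr; apply: eq_bigr => j _.
  by rewrite /G addKn drop_drop addnC.
rewrite sum_triangle; apply: eq_bigr => k _; rewrite size_drop; apply: eq_bigr => j _.
by rewrite addKn drop_drop addnC.
Qed.

Lemma adams2_smul_lier (g p : S) w : is_lie p ->
  adams2 (smul g p) w = adams2_mid p g w + smul (adams2 g) p w.
Proof.
move=> Hp; rewrite /adams2 /adams2_mid; under eq_bigr => k _ do rewrite coprod_smul_lier //.
rewrite big_split /=; congr (_ + _).
  apply: eq_big_nat => l /andP [_ Hl]; rewrite size_takel //.
  apply: eq_big_nat => i /andP [_ Hi].
  by rewrite take_takel // take_drop subnK // mulrC.
pose G i l := coprod g (take i w) (take (l - i) (drop i w)) * p (drop l w).
transitivity (\sum_(0 <= i < (size w).+1) \sum_(0 <= j < (size w - i).+1) G i (i + j)%N).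
  apply: eq_bigr => k _; rewrite size_drop; apply: eq_bigr => j _.
  by rewrite /G addKn drop_drop addnC.
rewrite -sum_triangle smulE; apply: eq_big_nat => l /andP [_ Hl].
rewrite size_takel // mulr_suml; apply: eq_big_nat => i /andP [_ Hi].
by rewrite /G take_takel // take_drop subnK.
Qed.

Lemma adams2_commutator (p g : S) w : is_lie p ->
  adams2 (fun z => smul p g z - smul g p z) w =
  smul p (adams2 g) w - smul (adams2 g) p w.
Proof.
move=> Hp; rewrite adams2B adams2_smul_liel // adams2_smul_lier //.
by rewrite opprD addrA addrK.
Qed.

(** * Cyclic sums and the closure of the commutators *)

(* The empty word counts as its own single rotation. *)
Definition cyclic_sum (f : S) (w : word) : K :=
  if w is [::] then f [::] else \sum_(0 <= i < size w) f (rot i w).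

Lemma cyclic_sumE (f : S) w :
  w != [::] -> cyclic_sum f w = \sum_(0 <= i < size w) f (rot i w).
Proof. by case: w. Qed.

Lemma cyclic_sum_rot1 (f : S) w : cyclic_sum f (rot 1 w) = cyclic_sum f w.
Proof.
have [->|w0] := eqVneq w [::]; first by [].
have w1 : rot 1 w != [::] by rewrite -size_eq0 size_rot size_eq0.
rewrite !cyclic_sumE // size_rot.
transitivity (\sum_(0 <= i < size w) f (rot i.+1 w)).
  by apply: eq_big_nat => i /andP [_ Hi]; rewrite rot_rot -rotS.
apply: (addrI (f (rot 0 w))).
rewrite -(big_nat_recl _ _ (fun i => f (rot i w))) // big_nat_recr //= rot_size rot0.
by rewrite addrC.
Qed.

Lemma cyclic_sum_rot (f : S) c w : cyclic_sum f (rot c w) = cyclic_sum f w.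
Proof.
elim: c => [|c IH]; first by rewrite rot0.
have [Hc|Hc] := ltnP c (size w); first by rewrite rotS // cyclic_sum_rot1.
by rewrite !rot_oversize // ltnW.
Qed.

Lemma cyclic_sum_smulC (a b : S) w : cyclic_sum (smul a b) w = cyclic_sum (smul b a) w.
Proof.
have [->|w0] := eqVneq w [::]; first by rewrite /= !smulE !big_nat1 mulrC.
rewrite !cyclic_sumE //.
under eq_bigr => r _ do rewrite smulE size_rot.
under [RHS]eq_bigr => r _ do rewrite smulE size_rot.
rewrite exchange_big [RHS]exchange_big big_nat_rev /=.
apply: eq_big_nat => i /andP [_ Hi]; rewrite add0n subSS.
transitivity (cyclic_sum (fun z => a (take (size w - i) z) * b (drop (size w - i) z)) (rot i w)).
  by rewrite cyclic_sum_rot cyclic_sumE.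
rewrite cyclic_sumE ?size_rot; last by rewrite -size_eq0 size_rot size_eq0.
apply: eq_bigr => r _; rewrite rot_rot; move: (rot r w) (size_rot r w) => z Hz.
by rewrite /rot take_size_cat ?drop_size_cat ?size_drop ?Hz // mulrC.
Qed.

Lemma eq_cyclic_sum_size (f g : S) w :
  (forall z, size z = size w -> f z = g z) -> cyclic_sum f w = cyclic_sum g w.
Proof.
case: w => [|y t] E; first exact: E.
by apply: eq_bigr => i _; rewrite E // size_rot.
Qed.

Lemma cyclic_sum_sum (I : Type) (r : seq I) (P : pred I) (F : I -> S) w :
  cyclic_sum (fun z => \sum_(i <- r | P i) F i z) w = \sum_(i <- r | P i) cyclic_sum (F i) w.
Proof. by case: w => [|y t] //=; rewrite exchange_big. Qed.

Lemma cyclic_sumB (f g : S) w :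
  cyclic_sum (fun z => f z - g z) w = cyclic_sum f w - cyclic_sum g w.
Proof. by case: w => [|y t] //=; rewrite sumrB. Qed.

Lemma cyclic_sumZ c (f : S) w : cyclic_sum (fun z => c * f z) w = c * cyclic_sum f w.
Proof. by case: w => [|y t] //=; rewrite mulr_sumr. Qed.

Lemma cyclic_sum_commutator (a b : S) w :
  cyclic_sum (fun z => smul a b z - smul b a z) w = 0.
Proof. by rewrite cyclic_sumB cyclic_sum_smulC subrr. Qed.

Lemma closure_cyclic_sum_eq0 (f : S) : in_comm_closure f -> forall w, cyclic_sum f w = 0.
Proof.
move=> Hf w; have [n [a [b Hab]]] := Hf (size w).+1.
rewrite (@eq_cyclic_sum_size _ (fun z => \sum_(i < n) (smul (a i) (b i) z - smul (b i) (a i) z))).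
  by rewrite cyclic_sum_sum big1 // => i _; rewrite cyclic_sum_commutator.
by move=> z Hz; rewrite Hab // Hz.
Qed.

Definition letter (x : 'I_d) : S := fun w => (w == [:: x])%:R.

Lemma lquot_letter y x : lquot y (letter x) =1 fun z => (y == x)%:R * @sone K d z.
Proof.
by move=> z; rewrite /lquot /letter /sone eqseq_cons; case: eqP; case: eqP; rewrite ?mulr1 ?mulr0.
Qed.

Lemma letter_lie x : is_lie (letter x).
Proof.
move=> [|x1 a] b; first by rewrite coprod_nill /letter /= if_same add0r.
case: b => [|y1 b]; first by rewrite coprod_nilr /letter /= addr0.
rewrite coprod_cons (eq_coprod (lquot_letter x1 x)) (eq_coprod (lquot_letter y1 x)).
by rewrite !coprodZ !coprod_sone /sone /= !mul0r !mulr0 !addr0.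
Qed.

Lemma smul_letterl x (g : S) (y : 'I_d) (t : word) :
  smul (letter x) g (y :: t) = (y == x)%:R * g t.
Proof.
rewrite -[LHS]/(lquot y (smul (letter x) g) t) lquot_smul -[letter x [::]]/0 mul0r addr0.
rewrite smulE; under eq_bigr => k _ do rewrite lquot_letter /sone -mulrA.
by rewrite -mulr_sumr sum_take_nil drop0 mul1r.
Qed.

Lemma smul_letterr x (g : S) (s : word) (z : 'I_d) :
  smul g (letter x) (rcons s z) = (z == x)%:R * g s.
Proof.
rewrite smulE size_rcons big_nat_recr //= big_nat_recr //= -cats1.
rewrite take_size_cat // drop_size_cat // drop_oversize ?size_cat ?addn1 //.
rewrite /letter /= mulr0 addr0 eqseq_cons andbT mulrC big1_seq ?add0r // => k /andP [_].
rewrite mem_index_iota => /andP [_ Hk]; rewrite drop_cat Hk.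
case: eqP => [/(congr1 size)|]; last by rewrite mulr0.
by rewrite size_cat size_drop /=; lia.
Qed.

Section CharZero.
Hypothesis HK : [pchar K] =i pred0.

Lemma natr_eq0_char0 n : (n%:R == 0 :> K) = (n == 0%N).
Proof. by move/pcharf0P: HK => ->. Qed.

Lemma natr_inj_char0 : injective (fun n : nat => n%:R : K).
Proof.
move=> a b /= E; wlog le_ab : a b E / (a <= b)%N.
  by move=> wl; case/orP: (leq_total a b) => /wl; [exact | move=> /(_ (esym E))].
by apply/eqP; rewrite eqn_leq le_ab -subn_eq0 -natr_eq0_char0 natrB // E subrr eqxx.
Qed.

(* The weights 1..n make [rot_primitive f w - rot_primitive f (rotr 1 w)]
   telescope to [f w] minus the cyclic sum of [f] at [w]. *)
Definition rot_primitive (f : S) (w : word) : K :=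
  (size w)%:R^-1 * \sum_(0 <= i < size w) i.+1%:R * f (rot i.+1 w).

Lemma rot_primitiveB (f : S) w : w != [::] -> cyclic_sum f w = 0 ->
  rot_primitive f w - rot_primitive f (rotr 1 w) = f w.
Proof.
move=> w0; rewrite cyclic_sumE // /rot_primitive size_rotr => cyc0.
have n0 : (size w)%:R != 0 :> K by rewrite natr_eq0_char0 size_eq0.
have -> : \sum_(0 <= i < size w) i.+1%:R * f (rot i.+1 (rotr 1 w)) =
          \sum_(0 <= i < size w) i%:R * f (rot i w) + \sum_(0 <= i < size w) f (rot i w).
  rewrite -big_split; apply: eq_big_nat => i /andP [_ Hi] /=.
  by rewrite rotS ?size_rotr // rot_rot rotrK mulrSr mulrDl mul1r.
have -> : \sum_(0 <= i < size w) i.+1%:R * f (rot i.+1 w) =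
          \sum_(0 <= i < size w) i%:R * f (rot i w) + (size w)%:R * f w.
  transitivity (\sum_(0 <= i < (size w).+1) i%:R * f (rot i w)).
    by rewrite big_nat_recl // mulr0n mul0r add0r.
  by rewrite big_nat_recr //= rot_size.
by rewrite cyc0 addr0 -mulrBr addrC addKr mulrA mulVf // mul1r.
Qed.

Lemma letter_commutators_decomp (f : S) w : cyclic_sum f w = 0 ->
  f w = \sum_(x < d) (smul (letter x) (lquot x (rot_primitive f)) w -
                      smul (lquot x (rot_primitive f)) (letter x) w).
Proof.
case/lastP: w => [|s z] cyc0.
  rewrite big1 ?cyc0 // => x _.
  by rewrite !smulE !big_nat1 /letter /= mulr0 mul0r subrr.
have [y [t yt]] : exists y t, rcons s z = y :: t by case: (s) => [|y s']; do 2 eexists.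
rewrite sumrB; under [X in _ = _ - X]eq_bigr => x _ do rewrite smul_letterr.
rewrite yt; under [X in _ = X - _]eq_bigr => x _ do rewrite smul_letterl.
by rewrite !sum_eq_natr_mul /lquot -(rotr1_rcons z s) -yt rot_primitiveB // yt.
Qed.

Lemma cyclic_sum_eq0_closure (f : S) :
  (forall w, cyclic_sum f w = 0) -> in_comm_closure f.
Proof.
move=> cyc0 N; exists d, letter, (fun x => lquot x (rot_primitive f)) => w _.
exact: letter_commutators_decomp.
Qed.

Lemma cyclic_sum_adams2 (f : S) n :
  (forall w, size w = n -> cyclic_sum f w = 0) ->
  forall w, size w = n -> cyclic_sum (adams2 f) w = 0.
Proof.
move=> cyc0 w Hw; pose B x := lquot x (rot_primitive f).
pose C g z := \sum_(x < d) (smul (letter x) (g x) z - smul (g x) (letter x) z).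
have decomp z : size z = n -> f z = C B z.
  by move=> Hz; apply: letter_commutators_decomp; apply: cyc0.
rewrite (@eq_cyclic_sum_size _ (C (fun x => adams2 (B x)))) => [|z Hz].
  by rewrite cyclic_sum_sum big1 // => x _; apply: cyclic_sum_commutator.
rewrite (@eq_adams2_size _ (C B)) => [|z' Hz']; last by rewrite decomp // Hz' Hz.
by rewrite adams2_sum; apply: eq_bigr => x _; rewrite adams2_commutator //; apply: letter_lie.
Qed.

(** * Separating the homogeneous components *)

Lemma cyclic_sum_eigen_parts (P : nat -> S) N n :
  (forall k w, adams2 (P k) w = (2 ^ k)%:R * P k w) ->
  (forall w, size w = n -> cyclic_sum (fun z => \sum_(k < N) P k z) w = 0) ->
  forall k w, (k < N)%N -> size w = n -> cyclic_sum (P k) w = 0.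
Proof.
move=> eigen cyc0 k w kN Hw; pose H z := \sum_(k < N) P k z.
have iterE r z : iter r adams2 H z = \sum_(k < N) ((2 ^ k) ^ r)%:R * P k z.
  elim: r z => [|r IH] z /=; first by apply: eq_bigr => i _; rewrite expn0 mul1r.
  rewrite (@eq_adams2_size _ _ _ (fun z _ => IH z)) adams2_sum.
  by apply: eq_bigr => i _; rewrite adams2Z eigen mulrA -natrM expnSr.
have cyc_iter r z : size z = n -> cyclic_sum (iter r adams2 H) z = 0.
  by elim: r z => [|r IH] z Hz /=; [apply: cyc0 | apply: cyclic_sum_adams2 IH z Hz].
apply: (@poly_coefs_eq0 _ (fun k => cyclic_sum (P k) w) N [seq (2 ^ r)%:R | r <- iota 0 N]
  _ _ _ k kN).
- by rewrite map_inj_uniq ?iota_uniq // => r1 r2 /natr_inj_char0; apply: expnI.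
- by rewrite size_map size_iota.
- move=> _ /mapP [r _ ->]; rewrite -[RHS](cyc_iter r w Hw).
  rewrite (eq_cyclic_sum_size (fun z _ => iterE r z)) cyclic_sum_sum.
  by apply: eq_bigr => i _; rewrite cyclic_sumZ mulrC -natrX -!expnM mulnC.
Qed.

Lemma cyclic_sum_homogeneous (I : finType) (u : S) (v : I -> S) (c : I -> nat -> K) :
  is_lie u -> (forall j, is_lie (v j)) ->
  (forall w, cyclic_sum (fun z => sexp u z - \sum_j spowser (c j) (v j) z) w = 0) ->
  forall m w, cyclic_sum (fun z => (m`!%:R)^-1 * spow u m z -
                                   \sum_j c j m * spow (v j) m z) w = 0.
Proof.
move=> Lu Lv cyc0 m w.
pose P k z := (k`!%:R)^-1 * spow u k z - \sum_j c j k * spow (v j) k z.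
pose N := (maxn (size w) m).+1.
apply: (@cyclic_sum_eigen_parts P N (size w)) => //; last by rewrite ltnS leq_maxr.
  move=> k z; rewrite adams2B adams2Z adams2_spow // adams2_sum mulrBr mulrCA mulr_sumr.
  by congr (_ - _); apply: eq_bigr => j _; rewrite adams2Z adams2_spow // mulrCA.
move=> z Hz; rewrite -[RHS](cyc0 z); apply: eq_cyclic_sum_size => z' Hz'.
have z'N : (size z' < N)%N by rewrite Hz' Hz ltnS leq_maxl.
rewrite sumrB exchange_big -[sexp u z']/(spowser (fun k => (k`!%:R)^-1) u z').
rewrite (spowser_trunc _ (lie_nil Lu) z'N); congr (_ - _).
by apply: eq_bigr => j _; rewrite (spowser_trunc _ (lie_nil (Lv j)) z'N).
Qed.

End CharZero.

End Series.

Theorem theorem3p3 (K : fieldType) (HK : [pchar K] =i pred0) (d n : nat)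
  (u : series K d) (v : 'I_n.+1 -> series K d)
  (Hu : is_lie u) (Hv : forall j, is_lie (v j))
  (H : exists c : 'I_n.+1 -> nat -> K,
         in_comm_closure (fun w => sexp u w - \sum_(j < n.+1) spowser (c j) (v j) w)) :
  forall m : nat, exists a : 'I_n.+1 -> K,
    in_comm_closure (fun w => spow u m w - \sum_(j < n.+1) a j * spow (v j) m w).
Proof.
move=> m; have [c /closure_cyclic_sum_eq0 cyc0] := H.
exists (fun j => m`!%:R * c j m); apply: (cyclic_sum_eq0_closure HK) => w.
have fact_neq0 : m`!%:R != 0 :> K by rewrite natr_eq0_char0 // -lt0n fact_gt0.
transitivity (m`!%:R * cyclic_sum (fun z => (m`!%:R)^-1 * spow u m z -
                          \sum_j c j m * spow (v j) m z) w).
  rewrite -cyclic_sumZ; apply: eq_cyclic_sum_size => z _.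
  rewrite mulrBr mulrA mulfV // mul1r mulr_sumr.
  by congr (_ - _); apply: eq_bigr => j _; rewrite mulrA.
by rewrite (cyclic_sum_homogeneous HK Hu Hv cyc0) mulr0.
Qed.
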